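(* Let $\Gamma$ and the data $s_0,\eta_0,\Xi$ be as in the context. There exists $t_0>0$ such that for every $\mathbf x\in\mathbb R^{n-1}$ and every $t>t_0$: if $u(\mathbf x)\sigma a(t)=\gamma\xi na(s)k$ with $\gamma\in\Gamma$, $\xi\in\Xi$, $n\in N$, $s>s_0$ and $k\in K$, then $\gamma\xi\notin P$.
   Context: $n\ge2$, $G=\mathrm{SO}(n,1)$, $K\cong\mathrm{SO}(n)$ maximal compact. $A=\{a(t)\}$ a one-parameter $\mathbb R$-split torus with $\mathfrak g=\mathfrak g_{-1}\oplus\mathfrak z(A)\oplus\mathfrak g_{+1}$, $\mathrm{Ad}(a(t))=e^{\pm t}$ on $\mathfrak g_{\pm1}$; $M=Z_G(A)\cap K$, $N=\exp\mathfrak g_{+1}$, $\mathfrak g_{+1}\cong\mathbb R^{n-1}$, $u(\mathbf x)=\exp\mathbf x$; $\sigma\in K$ with $\sigma^2=e$, $\sigma a(t)\sigma^{-1}=a(-t)$; $P=MAN$. For compact $\eta\subset N$: $A_s=\{a(t):t\ge s\}$, $\Omega(\eta,s)=\eta A_sK$. $\Gamma\subset G$ discrete, $\Gamma\backslash G$ of finite volume, $\Gamma\backslash\mathbb H^n$ non-compact, with fixed $s_0>0$, compact $\eta_0\subset N$, finite $\Xi\subset G$, $e\in\Xi$, satisfying: (i) $G=\Gamma\Xi\Omega(\eta_0,s_0)$; (ii) $\Gamma\cap\xi N\xi^{-1}$ is a cocompact lattice in $\xi N\xi^{-1}$; (iii) for compact $\eta\subset N$, $\{\gamma:\gamma\Xi\Omega(\eta,s_0)\cap\Omega(\eta,s_0)\neq\emptyset\}$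 is finite; (iv) for each compact $\eta\supseteq\eta_0$ there is $s_1>s_0$ with: $\gamma\xi_1\Omega(\eta,s_0)\cap\xi_2\Omega(\eta,s_1)\neq\emptyset$ implies $\xi_1=\xi_2$, $\gamma\in\xi_1NM\xi_1^{-1}$. *)

From HB Require Import structures.
From mathcomp Require Import all_boot all_order all_algebra.
From mathcomp Require Import all_classical all_reals all_analysis.
Set Implicit Arguments. Unset Strict Implicit. Unset Printing Implicit Defensive.
Import Order.TTheory GRing.Theory Num.Theory.
Import numFieldTopology.Exports numFieldNormedType.Exports.
Local Open Scope classical_set_scope.
Local Open Scope ring_scope.

Section SOn1.
Variables (R : realType) (n : nat).

Definition Mat := 'M[R]_(n.+1).
(* coordinates 0..n-2 : horizontal, n-1 : the A-direction, n (= ord_max) : timelike *)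
Definition iA : 'I_(n.+1) := inord n.-1.

Definition Jf : Mat := \matrix_(i, j) (if i == j then (if i == ord_max then -1 else 1) else 0).

(* G = SO_0(n,1): preserves the form, det 1, preserves the future cone *)
Definition Gset : set Mat :=
  [set g | g^T *m Jf *m g = Jf /\ \det g = 1 /\ 0 < g ord_max ord_max].

Definition e_n : 'cV[R]_(n.+1) := \col_i (if i == ord_max then 1 else 0).

(* K = stabiliser in G of the base point e_n of the hyperboloid model, K ~ SO(n) *)
Definition Kset : set Mat := [set k | Gset k /\ k *m e_n = e_n].

Definition coshR (t : R) : R := (expR t + expR (- t)) / 2.
Definition sinhR (t : R) : R := (expR t - expR (- t)) / 2.

Definition a_ (t : R) : Mat := \matrix_(i, j)
  (if (i == iA) && (j == iA) then coshR t
   else if (i == iA) && (j == ord_max) then sinhR t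
   else if (i == ord_max) && (j == iA) then sinhR t
   else if (i == ord_max) && (j == ord_max) then coshR t
   else if i == j then 1 else 0).

(* f+ = e_{n-1} + e_n, eigenvector of a(t) with eigenvalue e^t *)
Definition fplus : 'cV[R]_(n.+1) :=
  \col_i (if (i == iA) || (i == ord_max) then 1 else 0).

Definition xt (x : 'rV[R]_(n.-1)) : 'cV[R]_(n.+1) :=
  \col_i (odflt 0 (omap (fun j : 'I_(n.-1) => x ord0 j) (insub (val i)))).

(* X_x in g_{+1}: X_x w = B(w, x) f+ - B(w, f+) x ;  X_x^3 = 0 *)
Definition Xn (x : 'rV[R]_(n.-1)) : Mat :=
  fplus *m (xt x)^T *m Jf - xt x *m fplus^T *m Jf.

(* u(x) = exp(X_x) = 1 + X_x + X_x^2 / 2 *)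
Definition u_ (x : 'rV[R]_(n.-1)) : Mat :=
  1%:M + Xn x + (2^-1 : R) *: (Xn x *m Xn x).

Definition Nset : set Mat := [set g | exists x, g = u_ x].

Definition Mset : set Mat :=
  [set m | Gset m /\ Kset m /\ forall t, m *m a_ t = a_ t *m m].

Definition Pset : set Mat :=
  [set p | exists m t x, Mset m /\ p = m *m a_ t *m u_ x].

(* Omega(eta, s) = eta A_s K, eta given as a subset of R^{n-1} ~ N via u *)
Definition Omega (eta : set 'rV[R]_(n.-1)) (s : R) : set Mat :=
  [set g | exists x t k, eta x /\ s <= t /\ Kset k /\ g = u_ x *m a_ t *m k].

Definition is_subgroup (Gam : set Mat) : Prop :=
  Gam `<=` Gset /\ Gam 1%:M /\
  (forall g h, Gam g -> Gam h -> Gam (g *m h)) /\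
  (forall g, Gam g -> Gam (invmx g)).

Definition discrete_mx (Gam : set Mat) : Prop :=
  exists e : R, 0 < e /\ forall g, Gam g ->
    (forall i j, `|g i j - (1%:M : Mat) i j| < e) -> g = 1%:M.

(* Gamma \ G is non-compact (equivalently Gamma \ H^n non-compact):
   no bounded (hence relatively compact) set B of G with G = Gamma B *)
Definition noncompact_quotient (Gam : set Mat) : Prop :=
  ~ exists C : R, forall g, Gset g -> exists gam b, Gam gam /\ Gset b /\
      (forall i j, `|b i j| <= C) /\ g = gam *m b.

End SOn1.

Arguments iA {n}.
Arguments Jf {R n}.
Arguments Gset {R n}.
Arguments e_n {R n}.
Arguments Kset {R n}.
Arguments a_ {R n} t.
Arguments fplus {R n}.
Arguments xt {R n} x.
Arguments Xn {R n} x.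
Arguments u_ {R n} x.
Arguments Nset {R n}.
Arguments Mset {R n}.
Arguments Pset {R n}.
Arguments Omega {R n} eta s.
Arguments is_subgroup {R n} Gam.
Arguments discrete_mx {R n} Gam.
Arguments noncompact_quotient {R n} Gam.

From HB Require Import structures.
From mathcomp Require Import all_boot all_order all_algebra.
From mathcomp Require Import all_classical all_reals all_analysis.
From mathcomp Require Import ring lra.
Import Order.TTheory GRing.Theory Num.Theory.
Import numFieldTopology.Exports numFieldNormedType.Exports.
Local Open Scope classical_set_scope.
Local Open Scope ring_scope.

(* The row vector B(f+, .) is fixed by N and M and scaled by e^-t under a(t), so
   the height h(g) = B(f+, g e_n) is invariant under left multiplication by NM and
   h(a(t) k) = -e^-t.  If gam xi = m a(tau) u(z) were in P, then gam xi u(-z) a(r)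
   = a(tau + r) m lies deep in the cusp at 1, so condition (iv) for eta0 u {0, -z}
   forces xi = 1 and gam in NM.  Then h(u(x) sigma a(t)) = h(a(-t) sigma) = -e^t
   would equal h(gam u(y) a(s) k) = -e^-s, which is impossible for s, t > 0. *)

Section Height.
Variables (R : realType) (n : nat).
Hypothesis n_gt0 : (0 < n)%N.
Notation Mat := 'M[R]_(n.+1).

Lemma iA_max : (@iA n == ord_max) = false.
Proof. by rewrite -val_eqE /= /iA inordK; case: n n_gt0 => // k _ /=; rewrite ltn_eqF. Qed.

Lemma max_iA : (ord_max == @iA n) = false.
Proof. by rewrite eq_sym iA_max. Qed.

Lemma mulmx_aE m (A : 'M[R]_(m, n.+1)) t i j : (A *m a_ t) i j =
  if j == iA then A i iA * coshR t + A i ord_max * sinhR t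
  else if j == ord_max then A i iA * sinhR t + A i ord_max * coshR t
  else A i j.
Proof.
have off_plane k l : k != iA -> k != ord_max -> (l == iA) || (l == ord_max) ->
    A i k * (a_ t : Mat) k l = 0.
  move=> /negbTE kA /negbTE kM /orP lAM; rewrite mxE kA kM /=.
  by case: lAM => /eqP ->; rewrite ?kA ?kM mulr0.
rewrite mxE; case: (eqVneq j iA) => [->|jA]; last case: (eqVneq j ord_max) => [->|jM].
1,2: rewrite (bigD1 iA) // (bigD1 ord_max) ?max_iA //= big1 ?addr0;
  [by rewrite !mxE !eqxx max_iA | by move=> k /andP[kA kM]; rewrite off_plane ?eqxx ?orbT].
rewrite (bigD1 j) //= big1 ?addr0.
  by rewrite mxE (negbTE jA) (negbTE jM) !andbF eqxx mulr1.
by move=> k kj; rewrite mxE (negbTE jA) (negbTE jM) !andbF (negbTE kj) mulr0.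
Qed.

Lemma mulmxJfE m (A : 'M[R]_(m, n.+1)) i j :
  (A *m Jf) i j = A i j * (if j == ord_max then -1 else 1).
Proof.
rewrite mxE (bigD1 j) //= big1 ?addr0; first by rewrite mxE eqxx.
by move=> k kj; rewrite mxE; case: eqP kj => // _ _; rewrite mulr0.
Qed.

Lemma mulmx_e_nE m (A : 'M[R]_(m, n.+1)) i j : (A *m e_n) i j = A i ord_max.
Proof.
rewrite mxE (bigD1 ord_max) //= big1 ?addr0; first by rewrite mxE eqxx mulr1.
by move=> k kj; rewrite mxE (negbTE kj) mulr0.
Qed.

Lemma trmx_Jf : (Jf : Mat)^T = Jf.
Proof. by apply/matrixP => i j; rewrite !mxE eq_sym; case: eqP => // ->. Qed.

Lemma coshD s t : coshR (s + t) = coshR s * coshR t + sinhR s * sinhR t :> R.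
Proof. by rewrite /coshR /sinhR opprD !expRD; field. Qed.

Lemma sinhD s t : sinhR (s + t) = sinhR s * coshR t + coshR s * sinhR t :> R.
Proof. by rewrite /coshR /sinhR opprD !expRD; field. Qed.

Lemma a_add s t : a_ s *m a_ t = a_ (s + t) :> Mat.
Proof.
have entry u k l : (a_ u : Mat) k l = (1%:M *m a_ u) k l by rewrite mul1mx.
apply/matrixP => i j.
rewrite mulmx_aE (entry s i iA) (entry s i ord_max) (entry (s + t) i j).
rewrite !mulmx_aE !eqxx !max_iA coshD sinhD.
case jA: (j == iA); first by ring.
case jM: (j == ord_max); first by ring.
by rewrite entry mulmx_aE jA jM.
Qed.

Lemma xt0 : @xt R n 0 = 0.
Proof. by apply/matrixP => i j; rewrite !mxE; case: insub => [k|] //=; rewrite mxE. Qed.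

Lemma xtN (x : 'rV[R]_(n.-1)) : @xt R n (- x) = - xt x.
Proof.
apply/matrixP => i j; rewrite !mxE; case: insub => [k|] /=; first by rewrite mxE.
by rewrite oppr0.
Qed.

Lemma xt_iA (x : 'rV[R]_(n.-1)) j : xt x iA j = 0.
Proof. by rewrite mxE insubF //= /iA inordK ?ltnn //; case: n n_gt0 => // k _; rewrite /= leqW. Qed.

Lemma xt_max (x : 'rV[R]_(n.-1)) j : xt x ord_max j = 0.
Proof. by rewrite mxE insubF //= ltnNge leq_pred. Qed.

Definition fplus_dual : 'rV[R]_(n.+1) := fplus^T *m Jf.

Lemma fplus_dualE i j :
  fplus_dual i j = if j == iA then 1 else if j == ord_max then -1 else 0.
Proof.
rewrite /fplus_dual mulmxJfE !mxE.
case: (eqVneq j iA) => [->|jA]; first by rewrite /= iA_max mulr1.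
by rewrite /=; case: eqP => _; rewrite ?mul1r ?mul0r.
Qed.

Lemma fplus_dual_mulmx p (B : 'M[R]_(n.+1, p)) i j :
  (fplus_dual *m B) i j = B iA j - B ord_max j.
Proof.
rewrite mxE (bigD1 iA) // (bigD1 ord_max) ?max_iA //= big1 ?addr0.
  by rewrite !fplus_dualE eqxx max_iA eqxx mul1r mulN1r.
by move=> k /andP[/negbTE kA /negbTE kM]; rewrite fplus_dualE kA kM mul0r.
Qed.

Lemma fplus_dual_e_n : (fplus_dual *m e_n) 0 0 = -1.
Proof. by rewrite fplus_dual_mulmx !mxE eqxx iA_max sub0r. Qed.

Lemma fplus_dual_a t : fplus_dual *m a_ t = expR (- t) *: fplus_dual.
Proof.
apply/matrixP => i j; rewrite mulmx_aE [in RHS]mxE !fplus_dualE eqxx max_iA eqxx.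
rewrite /coshR /sinhR.
case: (eqVneq j iA) => [_|jA]; first by rewrite mulr1; field.
case: (eqVneq j ord_max) => [_|jM]; first by rewrite mulrN1; field.
by rewrite mulr0.
Qed.

Lemma fplus_dual_fplus : fplus_dual *m fplus = 0.
Proof. by apply/matrixP => i j; rewrite fplus_dual_mulmx !mxE !eqxx orbT subrr. Qed.

Lemma fplus_dual_xt x : fplus_dual *m @xt R n x = 0.
Proof. by apply/matrixP => i j; rewrite fplus_dual_mulmx xt_iA xt_max subrr mxE. Qed.

Lemma Xn_fplus x : @Xn R n x *m fplus = 0.
Proof.
rewrite /Xn mulmxBl -!mulmxA.
have -> : (xt x)^T *m (Jf *m fplus) = (fplus_dual *m xt x)^T.
  by rewrite trmx_mul /fplus_dual trmx_mul trmx_Jf trmxK.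
have -> : (fplus : 'cV[R]_(n.+1))^T *m (Jf *m fplus) = fplus_dual *m fplus.
  by rewrite /fplus_dual mulmxA.
by rewrite fplus_dual_xt fplus_dual_fplus trmx0 !mulmx0 subrr.
Qed.

Lemma fplus_dual_Xn x : fplus_dual *m @Xn R n x = 0.
Proof. by rewrite /Xn mulmxBr !mulmxA fplus_dual_fplus fplus_dual_xt !mul0mx subrr. Qed.

Lemma fplus_dual_u x : fplus_dual *m @u_ R n x = fplus_dual.
Proof.
rewrite /u_ mulmxDr mulmxDr mulmx1 fplus_dual_Xn -scalemxAr mulmxA fplus_dual_Xn.
by rewrite mul0mx scaler0 !addr0.
Qed.

Lemma XnN x : @Xn R n (- x) = - Xn x.
Proof. by rewrite /Xn xtN linearN mulmxN !mulNmx opprB opprK addrC. Qed.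

Lemma Xn_cube x : @Xn R n x *m Xn x *m Xn x = 0.
Proof.
have -> : @Xn R n x *m Xn x = - (Xn x *m xt x) *m fplus_dual.
  by rewrite {2}/Xn mulmxBr !mulmxA Xn_fplus !mul0mx sub0r /fplus_dual !mulNmx ?mulmxA.
by rewrite -mulmxA fplus_dual_Xn mulmx0.
Qed.

Lemma mulmx_exp_nil3N (Y : Mat) : Y *m Y *m Y = 0 ->
  (1%:M + Y + (2^-1 : R) *: (Y *m Y)) *m (1%:M - Y + (2^-1 : R) *: (Y *m Y)) = 1%:M.
Proof.
move=> Y3; set h : R := 2^-1.
rewrite !mulmxDl !mulmxDr !mul1mx !mulmx1.
rewrite !mulmxN -!scalemxAr -!scalemxAl !mulmxA Y3 mul0mx !scaler0 !subr0 !addr0.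
have halves : h *: (Y *m Y) + h *: (Y *m Y) = Y *m Y.
  by rewrite -scalerDl /h [_ + _](_ : _ = 1) ?scale1r //; field.
by rewrite addrAC -(addrA _ (h *: _)) addrA -(addrA (1%:M - Y)) halves addrACA subrK subrr addr0.
Qed.

Lemma u0 : @u_ R n 0 = 1%:M.
Proof. by rewrite /u_ /Xn xt0 trmx0 mulmx0 !mul0mx subrr mulmx0 scaler0 !addr0. Qed.

Lemma u_mulN x : @u_ R n x *m u_ (- x) = 1%:M.
Proof. by rewrite /u_ XnN mulNmx mulmxN opprK mulmx_exp_nil3N // Xn_cube. Qed.

(* Off the (iA, max) plane the eigenrow equation reads v_k = e^-1 v_k; in the plane
   it reduces to sinh 1 * (v_iA + v_max) = 0. *)
Lemma a1_eigenrow (v : 'rV[R]_(n.+1)) :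
  v *m a_ 1 = expR (-1) *: v -> v ord0 ord_max = -1 -> v = fplus_dual.
Proof.
move=> /matrixP eig v_max.
have sinh1_neq0 : sinhR (1 : R) != 0.
  by rewrite /sinhR mulf_neq0 ?invr_eq0 ?pnatr_eq0 // subr_eq0.
have v_iA : v ord0 iA = 1.
  have := eig ord0 iA; rewrite mulmx_aE eqxx mxE => h.
  have : sinhR 1 * (v ord0 iA + v ord0 ord_max) = 0.
    rewrite -[RHS](subrr (expR (-1) * v ord0 iA)) -[in X in _ = X - _]h /coshR /sinhR.
    by field.
  by move/eqP; rewrite mulf_eq0 (negbTE sinh1_neq0) v_max /= subr_eq0 => /eqP.
apply/matrixP => i k; rewrite [i]ord1 fplus_dualE.
case: (eqVneq k iA) => [->|kA] //; case: (eqVneq k ord_max) => [->|kM] //.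
have := eig ord0 k; rewrite mulmx_aE (negbTE kA) (negbTE kM) mxE => /eqP.
rewrite -subr_eq0 -{1}[v ord0 k]mul1r -mulrBl mulf_eq0 subr_eq0 eq_sym.
by rewrite lt_eqF ?expR_lt1 ?ltrN10 //= => /eqP.
Qed.

Lemma fplus_dual_M (m : Mat) : Mset m -> fplus_dual *m m = fplus_dual.
Proof.
move=> [_ [[_ m_e_n] m_a]]; apply: a1_eigenrow.
  by rewrite -mulmxA m_a mulmxA fplus_dual_a scalemxAl.
by rewrite -(mulmx_e_nE _ (fplus_dual *m m) ord0 ord0) -mulmxA m_e_n fplus_dual_e_n.
Qed.

Definition height (g : Mat) : R := (fplus_dual *m g *m e_n) ord0 ord0.

Lemma height_mull (h g : Mat) :
  fplus_dual *m h = fplus_dual -> height (h *m g) = height g.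
Proof. by move=> hh; rewrite /height mulmxA hh. Qed.

Lemma height_aK t (k : Mat) : Kset k -> height (a_ t *m k) = - expR (- t).
Proof.
move=> [_ k_e_n].
rewrite /height -mulmxA -mulmxA k_e_n mulmxA fplus_dual_a -scalemxAl.
by rewrite mxE fplus_dual_e_n mulrN1.
Qed.

Lemma Gset_unitmx (g : Mat) : Gset g -> g \in unitmx.
Proof. by case=> _ [det_g _]; rewrite unitmxE det_g unitr1. Qed.

Lemma Kset1 : Kset (1%:M : Mat).
Proof.
do ![split]; rewrite ?trmx1 ?mul1mx ?mulmx1 ?det1 //.
by rewrite mxE eqxx ltr01.
Qed.

Lemma Pset_in_NM (Gam : set Mat) (s0 : R) (eta0 : set 'rV[R]_(n.-1)) (Xi : set Mat)
  (eta0_compact : compact eta0) (Xi1 : Xi 1%:M)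
  (h_iv : forall eta : set 'rV[R]_(n.-1), compact eta -> eta0 `<=` eta ->
      exists s1, s0 < s1 /\ forall gam xi1 xi2, Gam gam -> Xi xi1 -> Xi xi2 ->
        (exists w1 w2, Omega eta s0 w1 /\ Omega eta s1 w2 /\
            gam *m xi1 *m w1 = xi2 *m w2) ->
        xi1 = xi2 /\ exists x m, Mset m /\ gam = xi1 *m u_ x *m m *m invmx xi1)
  gam xi : Gam gam -> Xi xi -> Pset (gam *m xi) ->
  xi = 1%:M /\ fplus_dual *m gam = fplus_dual.
Proof.
move=> gam_Gam xi_Xi [m [tau [z [m_M gam_xi]]]].
have [_ [m_K m_a]] := m_M.
set eta := eta0 `|` [set 0] `|` [set - z].
have eta_compact : compact eta by do ?[apply: compactU]; rewrite //; exact: compact_set1.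
have [s1 [_ cusp]] := h_iv eta eta_compact (fun w w0 => or_introl (or_introl w0)).
pose r : R := Num.max (s1 - tau) s0.
have [xi1 [x' [m' [m'_M gamE]]]] : xi = 1%:M /\
    exists x m, Mset m /\ gam = xi *m u_ x *m m *m invmx xi.
  apply: cusp => //.
  exists (u_ (- z) *m a_ r *m 1%:M), (u_ 0 *m a_ (tau + r) *m m); split; [|split].
  - exists (- z), r, 1%:M; split; first by right.
    by split; [rewrite le_max lexx orbT | split; [exact: Kset1 |]].
  - exists 0, (tau + r), m; split; first by left; right.
    by split; [rewrite -lerBlDl le_max lexx | split].
  - by rewrite gam_xi u0 mul1mx !mulmx1 -!mulmxA (mulmxA (u_ z)) u_mulN mul1mx
      a_add m_a mul1mx.
split=> //; rewrite gamE xi1 invmx1 mulmx1 mul1mx.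
by rewrite mulmxA fplus_dual_u fplus_dual_M.
Qed.

End Height.

Arguments height {R n} g.

Theorem proposition3p1 (R : realType) (n : nat) (hn : (2 <= n)%N)
  (sigma : 'M[R]_(n.+1))
  (hsK : Kset sigma) (hs2 : sigma *m sigma = 1%:M)
  (hsa : forall t : R, sigma *m a_ t *m invmx sigma = a_ (- t))
  (Gam : set 'M[R]_(n.+1)) (hGsub : is_subgroup Gam) (hGdisc : discrete_mx Gam)
  (hGnc : noncompact_quotient Gam)
  (s0 : R) (eta0 : set 'rV[R]_(n.-1)) (Xi : set 'M[R]_(n.+1))
  (hs0 : 0 < s0) (heta0 : compact eta0)
  (hXi : finite_set Xi) (hXiG : Xi `<=` Gset) (hXi1 : Xi 1%:M)
  (h_i : forall g, Gset g -> exists gam xi w,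
      Gam gam /\ Xi xi /\ Omega eta0 s0 w /\ g = gam *m xi *m w)
  (h_ii : forall xi, Xi xi -> exists C : set 'rV[R]_(n.-1), compact C /\
      forall x, exists gam y, Gam gam /\ C y /\
        xi *m u_ x *m invmx xi = gam *m (xi *m u_ y *m invmx xi))
  (h_iii : forall eta : set 'rV[R]_(n.-1), compact eta ->
      finite_set [set gam | Gam gam /\ exists xi w,
         Xi xi /\ Omega eta s0 w /\ Omega eta s0 (gam *m xi *m w)])
  (h_iv : forall eta : set 'rV[R]_(n.-1), compact eta -> eta0 `<=` eta ->
      exists s1, s0 < s1 /\ forall gam xi1 xi2, Gam gam -> Xi xi1 -> Xi xi2 ->
        (exists w1 w2, Omega eta s0 w1 /\ Omega eta s1 w2 /\
            gam *m xi1 *m w1 = xi2 *m w2) ->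
        xi1 = xi2 /\ exists x m, Mset m /\ gam = xi1 *m u_ x *m m *m invmx xi1) :
  exists t0 : R, 0 < t0 /\
    forall (x : 'rV[R]_(n.-1)) (t : R), t0 < t ->
    forall gam xi (y : 'rV[R]_(n.-1)) (s : R) k,
      Gam gam -> Xi xi -> s0 < s -> Kset k ->
      u_ x *m sigma *m a_ t = gam *m xi *m u_ y *m a_ s *m k ->
      ~ Pset (gam *m xi).
Proof.
have n_gt0 := ltnW hn.
exists 1; split=> // x t t_gt1 gam xi y s k gam_Gam xi_Xi s_gt k_K eq_g gam_xi_P.
have [xi1 gam_NM] :=
  @Pset_in_NM _ _ n_gt0 _ _ _ _ heta0 hXi1 h_iv _ _ gam_Gam xi_Xi gam_xi_P.
have sigma_a : sigma *m a_ t = a_ (- t) *m sigma.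
  by rewrite -(hsa t) mulmxKV // Gset_unitmx; case: hsK.
have lhs : height (u_ x *m sigma *m a_ t) = - expR t.
  by rewrite -mulmxA height_mull ?fplus_dual_u // sigma_a height_aK // opprK.
have rhs : height (gam *m xi *m u_ y *m a_ s *m k) = - expR (- s).
  by rewrite xi1 mulmx1 -!mulmxA height_mull // height_mull ?fplus_dual_u // height_aK.
move: lhs; rewrite eq_g rhs => /eqP; rewrite eqr_opp => /eqP /expR_inj; lra.
Qed.
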